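(* Let $\Lambda$ be a row-finite $k$-graph with no sources and let $\{t_\lambda\}_{\lambda\in\Lambda}$ be a representation of $C^*(\Lambda)$ with associated projection valued measure $P$. (a) If $\omega,\gamma\in\Lambda^\infty$ satisfy $\mathrm{Orbit}(\omega)=\mathrm{Orbit}(\gamma)$, then $P(\{\omega\})=0$ if and only if $P(\{\gamma\})=0$. (b) If the representation is purely atomic and $\Omega=\mathrm{supp}(P):=\{\omega\in\Lambda^\infty:P(\{\omega\})\neq0\}$, then $\Omega$ is a disjoint union of orbits, $\Omega=\bigsqcup_{\omega\in R}\mathrm{Orbit}(\omega)$ for a set $R\subseteq\Omega$ of orbit representatives, and $\bigoplus_{\omega\in R}P(\mathrm{Orbit}(\omega))=\mathrm{Id}_{\mathcal H}$.
   Context: A $k$-graph ($k\ge 1$) is a countable small category $\Lambda$ with a functor $d:\Lambda\to\mathbb N^k$ satisfying the factorization property: whenever $d(\lambda)=m+n$ there are unique $\mu,\nu$ with $\lambda=\mu\nu$, $d(\mu)=m$, $d(\nu)=n$. $\Lambda^0$ is the vertex set, $r,s$ range and source, $\Lambda^n=d^{-1}(n)$, $v\Lambda^n=\{\lambda\in\Lambda^n:r(\lambda)=v\}$; row-finite means each $v\Lambda^n$ finite, no sources means each $v\Lambda^n$ nonempty. $\Omega_k$ is the $k$-graph with objects $\mathbb N^k$, morphisms $(p,q)$ with $p\le q$, $d(p,q)=q-p$. An infinite path is a degree-preserving functor $x:\Omega_k\to\Lambda$; $\Lambda^\infty$ is the set of these. Shift: $\sigma^m(x)(p,q)=x(p+m,q+m)$.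 $\mathrm{Orbit}(\omega)=\{\gamma\in\Lambda^\infty:\sigma^m(\gamma)=\sigma^\ell(\omega)\text{ for some }m,\ell\in\mathbb N^k\}$. Cylinder sets $Z(\lambda)=\{x:x(0,d(\lambda))=\lambda\}$ generate the Borel $\sigma$-algebra. A representation of $C^*(\Lambda)$ is a family of partial isometries $\{t_\lambda\}$ on a Hilbert space $\mathcal H$ satisfying (CK1) $\{t_v\}_{v\in\Lambda^0}$ mutually orthogonal projections, (CK2) $t_\lambda t_\eta=t_{\lambda\eta}$ if $s(\lambda)=r(\eta)$, (CK3) $t_\lambda^*t_\lambda=t_{s(\lambda)}$, (CK4) $t_v=\sum_{\lambda\in v\Lambda^n}t_\lambda t_\lambda^*$. Its projection valued measure $P$ is the one on Borel sets of $\Lambda^\infty$ with $P(Z(\lambda))=t_\lambda t_\lambda^*$. The representation is purely atomic if there is a Borel $\Omega\subseteq\Lambda^\infty$ with $P(\Lambda^\infty\setminus\Omega)=0$, $P(\{\omega\})\neq0$ for $\omega\in\Omega$, and $\sum_{\omega\in\Omega}P(\{\omega\})=\mathrm{Id}$ strongly. *)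

From mathcomp Require Import all_boot all_algebra.
From mathcomp Require Import boolp classical_sets reals measure.
From mathcomp Require Import complex.
From Stdlib Require List.

Set Implicit Arguments.
Unset Strict Implicit.
Unset Printing Implicit Defensive.

Import GRing.Theory Num.Theory.
Local Open Scope classical_set_scope.
Local Open Scope ring_scope.

Definition NN (k : nat) := {ffun 'I_k -> nat}.
Definition zeroNN (k : nat) : NN k := [ffun => 0%N].
Definition addNN (k : nat) (m n : NN k) : NN k := [ffun i => (m i + n i)%N].

Lemma addNN_shuffle (k : nat) (p m n : NN k) :
  addNN (addNN p m) n = addNN (addNN p n) m.
Proof. by apply/ffunP => i; rewrite !ffunE -!addnA [(m i + _)%N]addnC. Qed.

(* Composition kcomp l m is meaningful when ksrc l = krng m.          *)
Record kgraph (k : nat) := KGraph {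
  kObj : Type;
  kMor : Type;
  krng : kMor -> kObj;
  ksrc : kMor -> kObj;
  kid : kObj -> kMor;
  kcomp : kMor -> kMor -> kMor;
  kdeg : kMor -> NN k;
  kObj_countable : exists f : kObj -> nat, injective f;
  kMor_countable : exists f : kMor -> nat, injective f;
  krng_id : forall v, krng (kid v) = v;
  ksrc_id : forall v, ksrc (kid v) = v;
  krng_comp : forall l m, ksrc l = krng m -> krng (kcomp l m) = krng l;
  ksrc_comp : forall l m, ksrc l = krng m -> ksrc (kcomp l m) = ksrc m;
  kcomp_idl : forall l, kcomp (kid (krng l)) l = l;
  kcomp_idr : forall l, kcomp l (kid (ksrc l)) = l;
  kcompA : forall l m n, ksrc l = krng m -> ksrc m = krng n ->
    kcomp l (kcomp m n) = kcomp (kcomp l m) n;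
  kdeg_id : forall v, kdeg (kid v) = zeroNN k;
  kdeg_comp : forall l m, ksrc l = krng m ->
    kdeg (kcomp l m) = addNN (kdeg l) (kdeg m);
  kfactor : forall l (m n : NN k), kdeg l = addNN m n ->
    exists! p : kMor * kMor,
      [/\ ksrc p.1 = krng p.2, l = kcomp p.1 p.2, kdeg p.1 = m & kdeg p.2 = n]
}.

Definition row_finite (k : nat) (L : kgraph k) :=
  forall (v : kObj L) (n : NN k), exists s : seq (kMor L),
    List.NoDup s /\ forall l, List.In l s <-> (krng l = v /\ kdeg l = n).

Definition no_sources (k : nat) (L : kgraph k) :=
  forall (v : kObj L) (n : NN k), exists l : kMor L, krng l = v /\ kdeg l = n.

(* Infinite paths: degree-preserving functors Omega_k -> Lambda.       *)
(* The morphism (p, q), p <= q, of Omega_k is encoded as (p, n) with   *)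
(* n = q - p (a bijection between Omega_k's morphisms and N^k x N^k); *)
(* x p n is the image of the morphism (p, p + n).                     *)
Definition is_infpath (k : nat) (L : kgraph k) (x : NN k -> NN k -> kMor L) :=
  [/\ forall p n, kdeg (x p n) = n,
      forall p, x p (zeroNN k) = kid (krng (x p (zeroNN k))),
      forall p n, krng (x p n) = krng (x p (zeroNN k)),
      forall p n, ksrc (x p n) = krng (x (addNN p n) (zeroNN k)) &
      forall p n n', x p (addNN n n') = kcomp (x p n) (x (addNN p n) n')].

Record infpath (k : nat) (L : kgraph k) := InfPath {
  ipf :> NN k -> NN k -> kMor L;
  ipP : is_infpath ipf }.

Lemma shift_ok (k : nat) (L : kgraph k) (m : NN k) (x : infpath L) :
  is_infpath (fun p n => x (addNN p m) n).
Proof.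
case: x => x [h1 h2 h3 h4 h5] /=; split => //.
- by move=> p n; rewrite h4 addNN_shuffle.
- by move=> p n n'; rewrite h5 addNN_shuffle.
Qed.

(* sigma^m(x)(p, q) = x(p + m, q + m) *)
Definition shift (k : nat) (L : kgraph k) (m : NN k) (x : infpath L) :
  infpath L := InfPath (shift_ok m x).

Definition Orbit (k : nat) (L : kgraph k) (w : infpath L) : set (infpath L) :=
  [set g | exists m l : NN k, shift m g = shift l w].

Definition cyl (k : nat) (L : kgraph k) (l : kMor L) : set (infpath L) :=
  [set x | x (zeroNN k) (kdeg l) = l].

Definition borel_path (k : nat) (L : kgraph k) : set (set (infpath L)) :=
  <<s [set: infpath L], [set A | exists l : kMor L, A = cyl l] >>.
Arguments borel_path {k} L.

(* ip is linear in the first variable, conjugate-linear in the second. *)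
Section Hilbert.
Variables (R : realType) (H : lmodType R[i]) (ip : H -> H -> R[i]).

(* norm convergence, stated with the squared norm ip v v *)
Definition hconv (u : nat -> H) (h : H) :=
  forall eps : R[i], 0 < eps -> exists N : nat, forall n : nat, (N <= n)%N ->
    ip (u n - h) (u n - h) < eps.

Definition hcauchy (u : nat -> H) :=
  forall eps : R[i], 0 < eps -> exists N : nat, forall n m : nat,
    (N <= n)%N -> (N <= m)%N -> ip (u n - u m) (u n - u m) < eps.

Definition is_hilbert :=
  [/\ forall a x y z, ip (a *: x + y) z = a * ip x z + ip y z,
      forall x y, ip y x = (ip x y)^*,
      forall x, 0 <= ip x x,
      forall x, ip x x = 0 -> x = 0 &
      forall u, hcauchy u -> exists h, hconv u h].

Definition zero_op : H -> H := fun _ => 0.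

Definition linear_op (T : H -> H) :=
  forall a x y, T (a *: x + y) = a *: T x + T y.

Definition bounded_op (T : H -> H) :=
  exists c : R[i], forall x, ip (T x) (T x) <= c * ip x x.

Definition adjoint_of (T S : H -> H) := forall x y, ip (T x) y = ip x (S y).

(* unordered (net) sum over a possibly uncountable index set S:
   sum_{i in S} f i = h in norm *)
Definition hsum_to (I : Type) (S : set I) (f : I -> H) (h : H) :=
  forall eps : R[i], 0 < eps -> exists s0 : seq I,
    [/\ List.NoDup s0, (forall i, List.In i s0 -> S i) &
      forall s : seq I, List.NoDup s -> (forall i, List.In i s -> S i) ->
        (forall i, List.In i s0 -> List.In i s) ->
        ip (\sum_(i <- s) f i - h) (\sum_(i <- s) f i - h) < eps].

Definition is_PVM (T : Type) (M : set (set T)) (P : set T -> H -> H) :=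
  [/\ forall A, M A ->
        [/\ linear_op (P A), P A \o P A = P A & adjoint_of (P A) (P A)],
      P setT = id /\ P set0 = zero_op,
      forall A B, M A -> M B -> P (A `&` B) = P A \o P B &
      forall F : nat -> set T, (forall n, M (F n)) -> trivIset setT F ->
        forall h, hconv (fun N => \sum_(i < N) P (F i) h)
                        (P (\bigcup_n F n) h)].

End Hilbert.
Arguments zero_op {R H}.

Definition is_krep (k : nat) (L : kgraph k) (R : realType) (H : lmodType R[i])
    (ip : H -> H -> R[i]) (t ts : kMor L -> H -> H) :=
  [/\
      forall l, [/\ linear_op (t l), bounded_op ip (t l),
                    adjoint_of ip (t l) (ts l) & t l \o ts l \o t l = t l],
      (forall v, t (kid v) \o t (kid v) = t (kid v) /\ ts (kid v) = t (kid v))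
      /\ (forall v w, v <> w -> t (kid v) \o t (kid w) = zero_op (H:=H)),
      forall l m, ksrc l = krng m -> t (kcomp l m) = t l \o t m,
      forall l, ts l \o t l = t (kid (ksrc l)) &
      forall (v : kObj L) (n : NN k), exists s : seq (kMor L),
        [/\ List.NoDup s, forall l, List.In l s <-> (krng l = v /\ kdeg l = n) &
            t (kid v) = (fun h => \sum_(l <- s) t l (ts l h))]].

Definition assoc_PVM (k : nat) (L : kgraph k) (R : realType) (H : lmodType R[i])
    (ip : H -> H -> R[i]) (t ts : kMor L -> H -> H)
    (P : set (infpath L) -> H -> H) :=
  is_PVM ip (borel_path L) P /\ forall l, P (cyl l) = t l \o ts l.

Definition purely_atomic (k : nat) (L : kgraph k) (R : realType)
    (H : lmodType R[i]) (ip : H -> H -> R[i]) (P : set (infpath L) -> H -> H) :=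
  exists Om : set (infpath L),
    [/\ borel_path L Om, P (~` Om) = zero_op (H:=H),
        forall w, Om w -> P [set w] <> zero_op (H:=H) &
        forall h, hsum_to ip Om (fun w => P [set w] h) h].

(* Let x be a path, n in N^k, lam = x(0,n) and y = sigma^n x.  The cylinders
   Z(x(0, n + (j,...,j))) = lam Z(y(0,(j,...,j))) decrease to {x}, and (CK2), (CK3)
   give P(Z(lam mu)) = t_lam P(Z(mu)) t_lam^* and t_lam^* P(Z(lam mu)) t_lam = P(Z(mu)).
   As t_lam and t_lam^* are contractions, letting j grow yields
   P{x} = t_lam P{y} t_lam^* and P{y} = t_lam^* P{x} t_lam, so P{x} = 0 iff P{y} = 0;
   paths with the same orbit have a common shift.
   Orbits are countable unions of sets with at most one point, hence Borel, and the
   support of P is a union of orbits; keep one representative per orbit.  If the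
   atoms over a finite set F of paths already sum to within eps of h, then for any
   finite set of representatives whose orbits cover F the residual
   P(complement of the union of their orbits) h is dominated by P(complement of F) h. *)

From mathcomp Require Import all_boot all_order all_algebra.
From mathcomp Require Import boolp classical_sets reals measure.
From mathcomp Require Import complex.
From mathcomp Require Import ring.

Import Order.TTheory GRing.Theory Num.Theory.
Set Implicit Arguments.
Unset Strict Implicit.
Unset Printing Implicit Defensive.
Local Open Scope classical_set_scope.
Local Open Scope ring_scope.

Lemma linear_opB (R : realType) (H : lmodType R[i]) (T : H -> H) :
  linear_op T -> forall x y, T (x - y) = T x - T y.
Proof.
move=> lin; have T0 : T 0 = 0.
  have := lin 1 0 0; rewrite !scale1r addr0 => T00.
  by apply: (addrI (T 0)); rewrite addr0 -T00.
have TN y : T (- y) = - T y by have := lin (-1) y 0; rewrite addr0 T0 addr0 !scaleN1r.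
by move=> x y; have := lin 1 x (- y); rewrite !scale1r TN.
Qed.

Lemma additive_op0 (R : realType) (H : lmodType R[i]) (T : H -> H) :
  (forall x y, T (x - y) = T x - T y) -> T 0 = 0.
Proof. by move=> TB; have := TB 0 0; rewrite !subrr. Qed.

Section InnerProduct.
Variables (R : realType) (H : lmodType R[i]) (ip : H -> H -> R[i]).
Hypothesis hH : is_hilbert ip.

Lemma ipDl x y z : ip (x + y) z = ip x z + ip y z.
Proof. by case: hH => lin _ _ _ _; have := lin 1 x y z; rewrite scale1r mul1r. Qed.

Lemma ip0l z : ip 0 z = 0.
Proof. by apply: (addrI (ip 0 z)); rewrite -ipDl !addr0. Qed.

Lemma ipNl x z : ip (- x) z = - ip x z.
Proof.
by case: hH => lin _ _ _ _; have := lin (-1) x 0 z; rewrite scaleN1r addr0 ip0l addr0 mulN1r.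
Qed.

Lemma ip_conj x y : ip x y = (ip y x)^*.
Proof. by case: hH => _ conj_sym _ _ _; exact: conj_sym. Qed.

Lemma ipDr x y z : ip z (x + y) = ip z x + ip z y.
Proof. by rewrite ip_conj ipDl rmorphD /= -!ip_conj. Qed.

Lemma ipNr x z : ip z (- x) = - ip z x.
Proof. by rewrite ip_conj ipNl rmorphN /= -ip_conj. Qed.

Lemma ipBl x y z : ip (x - y) z = ip x z - ip y z.
Proof. by rewrite ipDl ipNl. Qed.

Lemma ipBr x y z : ip z (x - y) = ip z x - ip z y.
Proof. by rewrite ipDr ipNr. Qed.

Lemma ipNN x : ip (- x) (- x) = ip x x.
Proof. by rewrite ipNl ipNr opprK. Qed.

Lemma ip_ge0 x : 0 <= ip x x.
Proof. by case: hH. Qed.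

Lemma ip_eq0 x : ip x x = 0 -> x = 0.
Proof. by case: hH => _ _ _ + _; apply. Qed.

Lemma ip_inj_r u v : (forall x, ip x u = ip x v) -> u = v.
Proof. by move=> E; apply/eqP; rewrite -subr_eq0; apply/eqP/ip_eq0; rewrite ipBr E subrr. Qed.

Lemma ip_normD_le a b : ip (a + b) (a + b) <= ip a a + ip a a + (ip b b + ip b b).
Proof.
rewrite -subr_ge0; have -> : ip a a + ip a a + (ip b b + ip b b) - ip (a + b) (a + b)
    = ip (a - b) (a - b) by rewrite !ipDl !ipDr !ipNl !ipNr; ring.
exact: ip_ge0.
Qed.

Lemma hconv_unique u a b : hconv ip u a -> hconv ip u b -> a = b.
Proof.
move=> ua ub; set d := ip (a - b) (a - b).
have [d0|dn0] := eqVneq d 0; first by apply/eqP; rewrite -subr_eq0; apply/eqP/ip_eq0.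
have d_gt0 : 0 < d by rewrite lt_def dn0 ip_ge0.
pose e := d / 4%:R; have e_gt0 : 0 < e by rewrite divr_gt0 // ltr0n.
have [N1 near_a] := ua e e_gt0; have [N2 near_b] := ub e e_gt0.
set v := u (maxn N1 N2).
have va := near_a _ (leq_maxl N1 N2); have vb := near_b _ (leq_maxr N1 N2).
have ab : a - b = (v - b) + - (v - a) by rewrite opprB [RHS]addrC addrA subrK.
have : d < e + e + (e + e).
  apply: le_lt_trans (ltrD (ltrD vb vb) (ltrD va va)).
  by rewrite /d ab -[ip (v - a) _]ipNN; exact: ip_normD_le.
have -> : e + e + (e + e) = d by rewrite /e; field.
by rewrite ltxx.
Qed.

Lemma hconv_eventually_cst u a b N : hconv ip u a -> (forall n, (N <= n)%N -> u n = b) -> a = b.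
Proof.
move=> ua ub; apply: (hconv_unique ua) => eps eps_gt0; exists N => n /ub ->.
by rewrite subrr ip0l.
Qed.

Lemma eq_hconv u v a : (forall n, u n = v n) -> hconv ip u a -> hconv ip v a.
Proof. by move=> uv ua eps /ua [N near_a]; exists N => n; rewrite -uv; exact: near_a. Qed.

Lemma hconv_csub c u a : hconv ip (fun n => c - u n) (c - a) -> hconv ip u a.
Proof.
move=> ca eps /ca [N near_ca]; exists N => n /near_ca.
have -> : c - u n - (c - a) = - (u n - a) by rewrite !opprB [_ + (a - c)]addrC addrA subrK.
by rewrite ipNN.
Qed.

Lemma hconv_contr (T : H -> H) u a :
  (forall x y, T (x - y) = T x - T y) -> (forall x, ip (T x) (T x) <= ip x x) ->
  hconv ip u a -> hconv ip (fun n => T (u n)) (T a).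
Proof.
by move=> TB T_contr ua eps /ua [N near_a]; exists N => n /near_a; rewrite -TB; exact: le_lt_trans.
Qed.

Lemma proj_contr (Q : H -> H) : (forall v, Q (Q v) = Q v) -> adjoint_of ip Q Q ->
  forall v, ip (Q v) (Q v) <= ip v v.
Proof.
move=> Q_idem Q_adj v; rewrite -subr_ge0.
have QvQv : ip (Q v) v = ip (Q v) (Q v) by rewrite -{1}Q_idem Q_adj.
have vQv : ip v (Q v) = ip (Q v) (Q v) by rewrite -Q_adj.
have -> : ip v v - ip (Q v) (Q v) = ip (v - Q v) (v - Q v) by rewrite ipBl !ipBr QvQv vQv; ring.
exact: ip_ge0.
Qed.

Lemma adjoint_idem_contr (T S : H -> H) : adjoint_of ip T S ->
  (S \o T) \o (S \o T) = S \o T -> forall x, ip (T x) (T x) <= ip x x.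
Proof.
move=> TS idem x; set Q := S \o T.
have Q_idem v : Q (Q v) = Q v by have := congr1 (fun f => f v) idem.
have Q_adj : adjoint_of ip Q Q by move=> a b; rewrite [LHS]ip_conj -TS -ip_conj TS.
rewrite TS; change (ip x (Q x) <= ip x x).
by rewrite -Q_idem -Q_adj; exact: proj_contr.
Qed.

End InnerProduct.

Section SigmaAlgebra.
Variables (T : Type) (M : set (set T)).
Hypothesis hM : sigma_algebra setT M.

Lemma salg0 : M set0. Proof. by case: hM. Qed.

Lemma salgC A : M A -> M (~` A). Proof. by case: hM => _ + _ => /[apply]; rewrite setTD. Qed.

Lemma salgT : M setT. Proof. by rewrite -setC0; exact/salgC/salg0. Qed.

Lemma salg_bigcup (F : nat -> set T) : (forall n, M (F n)) -> M (\bigcup_n F n).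
Proof. by case: hM => _ _; apply. Qed.

Lemma salgU A B : M A -> M B -> M (A `|` B).
Proof. by move=> mA mB; rewrite -bigcup2E; apply: salg_bigcup => -[|[|n]] //=; exact: salg0. Qed.

Lemma salgI A B : M A -> M B -> M (A `&` B).
Proof. by move=> mA mB; rewrite -[A `&` B]setCK setCI; apply/salgC/salgU; exact: salgC. Qed.

Lemma salgD A B : M A -> M B -> M (A `\` B).
Proof. by move=> mA mB; apply: salgI => //; exact: salgC. Qed.

Lemma salg_bigcap (F : nat -> set T) : (forall n, M (F n)) -> M (\bigcap_n F n).
Proof.
by move=> mF; rewrite -[X in M X]setCK setC_bigcap; apply/salgC/salg_bigcup => n; exact/salgC.
Qed.

Lemma salg_bigcup_count (I : countType) (F : I -> set T) :
  (forall i, M (F i)) -> M (\bigcup_i F i).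
Proof.
move=> mF; pose G n := if unpickle n is Some i then F i else set0.
have -> : \bigcup_i F i = \bigcup_n G n.
  apply/seteqP; split=> [x [i _ Fx]|x [n _]]; first by exists (pickle i); rewrite /G ?pickleK.
  by rewrite /G; case: unpickle => // i Fx; exists i.
by apply: salg_bigcup => n; rewrite /G; case: unpickle => [i|]; [exact: mF | exact: salg0].
Qed.

Lemma salg_big_setU (I : Type) (f : I -> set T) (s : seq I) :
  (forall i, List.In i s -> M (f i)) -> M (\big[setU/set0]_(i <- s) f i).
Proof.
elim: s => [|a s IH] mf; first by rewrite big_nil; exact: salg0.
by rewrite big_cons; apply: salgU; [apply: mf; left | apply: IH => i si; apply: mf; right].
Qed.

End SigmaAlgebra.

Lemma in_big_setU_seq (I T : Type) (f : I -> set T) (s : seq I) x :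
  (\big[setU/set0]_(i <- s) f i) x <-> exists2 i, List.In i s & f i x.
Proof.
elim: s => [|a s IH]; first by rewrite big_nil; split=> [|[]].
rewrite big_cons; split=> [[fax|/IH [i si fx]]|[i [<-|si] fx]].
- by exists a; [left|].
- by exists i; [right|].
- by left.
- by right; apply/IH; exists i.
Qed.

Section NonincreasingSets.
Variables (T : Type) (Z : nat -> set T).
Hypothesis Z_succ : forall n, Z n.+1 `<=` Z n.

Lemma nonincr_sets i j : (i <= j)%N -> Z j `<=` Z i.
Proof.
apply: (homo_leq (f := Z) (r := fun A B => B `<=` A)) => [A|B A C AB BC|n] //.
exact: subset_trans BC AB.
Qed.

Lemma trivIset_setD_succ : trivIset setT (fun n => Z n `\` Z n.+1).
Proof.
move=> i j _ _ [x [[Zix Zi1x] [Zjx Zj1x]]].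
have [ij|ji|//] := ltngtP i j; first by case: Zi1x; exact: nonincr_sets ij _ Zjx.
by case: Zj1x; exact: nonincr_sets ji _ Zix.
Qed.

Lemma bigcup_setD_succ : \bigcup_n (Z n `\` Z n.+1) = Z 0 `\` \bigcap_n Z n.
Proof.
apply/seteqP; split=> [x [i _ [Zix Zi1x]]|x [Z0x notZx]].
  by split; [exact: nonincr_sets Zix | move=> /(_ i.+1 I)].
have [j notZjx] : exists j, ~ Z j x by apply/existsNP => Zx; apply: notZx => j _; exact: Zx.
elim: j notZjx => [//|j IH] notZj1x.
by have [Zjx|] := pselect (Z j x); [exists j | exact: IH].
Qed.

End NonincreasingSets.

Lemma seq_choice (I J : Type) (S : set I) (Q : J -> I -> Prop) (s' : seq J) :
  (forall j, List.In j s' -> exists2 i, S i & Q j i) ->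
  exists s : seq I, [/\ List.NoDup s, forall i, List.In i s -> S i &
    forall j, List.In j s' -> exists2 i, List.In i s & Q j i].
Proof.
move=> covered; suff [s [sS covers]] : exists s : seq I, (forall i, List.In i s -> S i) /\
    forall j, List.In j s' -> exists2 i, List.In i s & Q j i.
  pose dec a b := pselect (a = b :> I).
  exists (List.nodup dec s); split=> [|i /List.nodup_In /sS //|j /covers [i si Qji]].
    exact: List.NoDup_nodup.
  by exists i => //; apply/List.nodup_In.
elim: s' covered => [|j s' IH] covered; first by exists [::]; split=> ? [].
have [i Si Qji] := covered j (or_introl erefl).
have [s [sS covers]] := IH (fun j' js' => covered j' (or_intror js')).
exists (i :: s); split=> [i' [<-|/sS //]|j' [<-|/covers [i' si' Qi']]] //.
- by exists i; [left|].
- by exists i'; [right|].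
Qed.

Section ProjectionValuedMeasure.
Variables (R : realType) (H : lmodType R[i]) (ip : H -> H -> R[i]).
Variables (T : Type) (M : set (set T)) (P : set T -> H -> H).
Hypotheses (hH : is_hilbert ip) (hM : sigma_algebra setT M) (hP : is_PVM ip M P).

Lemma pvm_contr A : M A -> forall v, ip (P A v) (P A v) <= ip v v.
Proof.
case: hP => + _ _ _ => /[apply] -[_ idem adj]; apply: proj_contr => // v.
by have := congr1 (fun f => f v) idem.
Qed.

Lemma pvm0 h : P set0 h = 0. Proof. by case: hP => _ [_ ->]. Qed.

Lemma pvmT h : P setT h = h. Proof. by case: hP => _ [-> _]. Qed.

Lemma pvmI A B : M A -> M B -> P (A `&` B) = P A \o P B.
Proof. by case: hP => _ _ + _; apply. Qed.

Lemma pvm_subset A B : M A -> M B -> A `<=` B -> forall h, P A h = P A (P B h).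
Proof. by move=> mA mB AB h; rewrite -[in LHS](setIidl AB) pvmI. Qed.

Lemma pvmU A B : M A -> M B -> A `&` B = set0 -> forall h, P (A `|` B) h = P A h + P B h.
Proof.
move=> mA mB AB0 h; case: hP => _ _ _ /(_ (bigcup2 A B)) sigma_add.
have mAB n : M (bigcup2 A B n) by case: n => [|[|n]] //=; exact: salg0.
have := sigma_add mAB _ h; rewrite -trivIset_bigcup2 bigcup2E => /(_ AB0) sum_conv.
apply: (hconv_eventually_cst hH (N := 2) sum_conv) => -[|[|n]] // _.
by rewrite 2!big_ord_recl big1 ?addr0 // => i _; exact: pvm0.
Qed.

Lemma pvmD A B : M A -> M B -> B `<=` A -> forall h, P (A `\` B) h = P A h - P B h.
Proof.
move=> mA mB BA h; have AB0 : (A `\` B) `&` B = set0 by rewrite setDE -setIA setICl setI0.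
by rewrite -[in P A h](setDKU BA) pvmU ?addrK //; exact: salgD.
Qed.

Lemma pvmC A : M A -> forall h, P (~` A) h = h - P A h.
Proof. by move=> mA h; rewrite -setTD pvmD ?pvmT //; exact: salgT. Qed.

Lemma pvm_bigcap_nonincr (Z : nat -> set T) h : (forall n, M (Z n)) ->
  (forall n, Z n.+1 `<=` Z n) -> hconv ip (fun n => P (Z n) h) (P (\bigcap_n Z n) h).
Proof.
move=> mZ Z_succ; have mD n : M (Z n `\` Z n.+1) by exact: salgD.
have capZ0 : \bigcap_n Z n `<=` Z 0 by move=> x /(_ 0 I).
case: hP => _ _ _ /(_ _ mD (trivIset_setD_succ Z_succ) h).
rewrite bigcup_setD_succ // pvmD //; last exact: salg_bigcap.
move=> sum_conv; apply: (hconv_csub hH (c := P (Z 0) h)); apply: eq_hconv sum_conv.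
elim=> [|n IH]; first by rewrite big_ord0 subrr.
by rewrite big_ord_recr /= IH pvmD // addrA subrK.
Qed.

Lemma pvm_big_setU (I : Type) (f : I -> set T) (s : seq I) :
  List.NoDup s -> (forall i, List.In i s -> M (f i)) -> trivIset [set i | List.In i s] f ->
  forall h, \sum_(i <- s) P (f i) h = P (\big[setU/set0]_(i <- s) f i) h.
Proof.
elim: s => [|a s IH] + mf f_triv h; first by rewrite !big_nil pvm0.
move=> /List.NoDup_cons_iff [a_s s_uniq].
have ms i : List.In i s -> M (f i) by move=> si; apply: mf; right.
rewrite !big_cons IH //; last by apply: sub_trivIset f_triv => i; right.
rewrite pvmU //; [by apply: mf; left | exact: salg_big_setU |].
apply/seteqP; split=> // x [fax /in_big_setU_seq [i si fx]]; apply: a_s.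
by rewrite (f_triv a i (or_introl erefl) (or_intror si)) //; exists x.
Qed.

Lemma pvm_sum_resid (I : Type) (f : I -> set T) (s : seq I) :
  List.NoDup s -> (forall i, List.In i s -> M (f i)) -> trivIset [set i | List.In i s] f ->
  forall h, \sum_(i <- s) P (f i) h - h = - P (~` \big[setU/set0]_(i <- s) f i) h.
Proof.
by move=> s_uniq mf f_triv h; rewrite pvm_big_setU // pvmC ?opprB //; exact: salg_big_setU.
Qed.

Lemma hsum_to_pvm_coarsen (I J : Type) (S : set I) (S' : set J)
    (f : I -> set T) (g : J -> set T) h :
  (forall i, S i -> M (f i)) -> (forall j, S' j -> M (g j)) ->
  trivIset S f -> trivIset S' g -> (forall j, S' j -> exists2 i, S i & g j `<=` f i) ->
  hsum_to ip S' (fun j => P (g j) h) h -> hsum_to ip S (fun i => P (f i) h) h.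
Proof.
move=> mf mg f_triv g_triv coarser sum_g eps /sum_g [s0' [s0'_uniq s0'S' near_h]].
have [s0 [s0_uniq s0S covers]] := seq_choice (fun j js0' => coarser j (s0'S' j js0')).
exists s0; split=> // s s_uniq sS s0s.
have ms i : List.In i s -> M (f i) by move=> /sS; exact: mf.
have mg0 j : List.In j s0' -> M (g j) by move=> /s0'S'; exact: mg.
have := near_h s0' s0'_uniq s0'S' (fun _ => id).
rewrite !pvm_sum_resid //; [|exact: sub_trivIset sS f_triv|exact: sub_trivIset s0'S' g_triv].
rewrite !ipNN // => resid_V; apply: le_lt_trans resid_V.
set U := \big[setU/set0]_(i <- s) f i; set V := \big[setU/set0]_(j <- s0') g j.
have mU : M (~` U) by apply: salgC => //; exact: salg_big_setU.
have mV : M (~` V) by apply: salgC => //; exact: salg_big_setU.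
have UV : ~` U `<=` ~` V.
  apply: subsetC => x /in_big_setU_seq [j /covers [i /s0s si gfi] gjx].
  by apply/in_big_setU_seq; exists i => //; exact: gfi.
by rewrite (pvm_subset mU mV UV); exact: pvm_contr.
Qed.

End ProjectionValuedMeasure.

Section InfinitePaths.
Variables (k : nat) (L : kgraph k).
Local Notation O0 := (zeroNN k).

Lemma add0NN (n : NN k) : addNN O0 n = n. Proof. by apply/ffunP => i; rewrite !ffunE. Qed.

Lemma addNNC (m n : NN k) : addNN m n = addNN n m.
Proof. by apply/ffunP => i; rewrite !ffunE addnC. Qed.

Lemma addNNA (m n p : NN k) : addNN m (addNN n p) = addNN (addNN m n) p.
Proof. by apply/ffunP => i; rewrite !ffunE addnA. Qed.

Definition constNN (j : nat) : NN k := [ffun => j].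

Lemma infpath_deg (x : infpath L) p n : kdeg (x p n) = n.
Proof. by case: x => x []. Qed.

Lemma infpath_src (x : infpath L) p n n' : ksrc (x p n) = krng (x (addNN p n) n').
Proof. by case: x => x [_ _ rng src _] /=; rewrite src rng. Qed.

Lemma infpath_comp (x : infpath L) p n n' :
  x p (addNN n n') = kcomp (x p n) (x (addNN p n) n').
Proof. by case: x => x []. Qed.

Lemma infpath_factor_eq (x y : infpath L) p q r : x p (addNN q r) = y p (addNN q r) ->
  x p q = y p q /\ x (addNN p q) r = y (addNN p q) r.
Proof.
move=> xy; have [[a b] [_ factor_uniq]] := kfactor (infpath_deg y p (addNN q r)).
have factor_of (z : infpath L) : z p (addNN q r) = y p (addNN q r) ->
    (a, b) = (z p q, z (addNN p q) r).
  move=> zy; apply: factor_uniq; split; rewrite /= ?infpath_deg //.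
    exact: infpath_src.
  by rewrite -zy infpath_comp.
by have := factor_of x xy; rewrite (factor_of y erefl) => -[-> ->].
Qed.

Lemma infpath_prefix_eq (x y : infpath L) p q r :
  x p (addNN q r) = y p (addNN q r) -> x p q = y p q.
Proof. by case/infpath_factor_eq. Qed.

Lemma infpath_ext (x y : infpath L) : (forall p n, x p n = y p n) -> x = y.
Proof.
case: x y => [x x_path] [y y_path] /= xy.
have e : x = y by apply/funext => p; apply/funext => n; exact: xy.
by subst y; congr InfPath; exact: Prop_irrelevance.
Qed.

Lemma infpath_eq0 (x y : infpath L) : (forall q, x O0 q = y O0 q) -> x = y.
Proof.
move=> xy; apply: infpath_ext => p n.
by have [_] := infpath_factor_eq (xy (addNN p n)); rewrite add0NN.
Qed.

Lemma eq_shift_prefix (x y : infpath L) m :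
  x O0 m = y O0 m -> shift m x = shift m y -> x = y.
Proof.
move=> pre post; apply: infpath_eq0 => q; apply: (@infpath_prefix_eq _ _ _ _ m).
rewrite [addNN q m]addNNC !infpath_comp pre; congr kcomp.
by have := congr1 (fun z : infpath L => z O0 q) post.
Qed.

Lemma shiftD a b (x : infpath L) : shift a (shift b x) = shift (addNN a b) x.
Proof. by apply: infpath_ext => p n /=; rewrite addNNA. Qed.

Lemma orbit_refl (w : infpath L) : Orbit w w.
Proof. by exists O0, O0. Qed.

Lemma orbit_sym (w g : infpath L) : Orbit w g -> Orbit g w.
Proof. by case=> m [l e]; exists l, m. Qed.

Lemma orbit_trans (u w g : infpath L) : Orbit u w -> Orbit w g -> Orbit u g.
Proof.
case=> m' [l' e'] [m [l e]]; exists (addNN m' m), (addNN l l').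
by rewrite -shiftD e shiftD addNNC -shiftD e' shiftD.
Qed.

Lemma orbit_eq (w g : infpath L) : Orbit w g -> Orbit g = Orbit w.
Proof.
move=> wg; apply/seteqP; split=> z; first exact: orbit_trans.
by move=> wz; apply: orbit_trans (orbit_sym wg) wz.
Qed.

Definition path_cyl (b : NN k) (x : infpath L) (j : nat) :=
  cyl (x O0 (addNN b (constNN j))).

Lemma path_cylP b x j z :
  path_cyl b x j z <-> z O0 (addNN b (constNN j)) = x O0 (addNN b (constNN j)).
Proof. by rewrite /path_cyl /cyl /= infpath_deg. Qed.

Lemma path_cyl_succ b x j : path_cyl b x j.+1 `<=` path_cyl b x j.
Proof.
move=> z /path_cylP zx; apply/path_cylP; apply: (@infpath_prefix_eq _ _ _ _ (constNN 1)).
have -> : addNN (addNN b (constNN j)) (constNN 1) = addNN b (constNN j.+1).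
  by apply/ffunP => i; rewrite !ffunE addn1 addnS.
exact: zx.
Qed.

Lemma bigcap_path_cyl b x : \bigcap_j path_cyl b x j = [set x].
Proof.
apply/seteqP; split=> z; last by move=> -> j _; exact/path_cylP.
move=> zx; apply: infpath_eq0 => q; set j := (\max_i q i)%N.
pose r : NN k := [ffun i => (b i + j - q i)%N].
have e : addNN b (constNN j) = addNN q r.
  apply/ffunP => i; rewrite !ffunE subnKC //.
  exact: leq_trans (leq_bigmax i) (leq_addl _ _).
by have /path_cylP := zx j I; rewrite e; exact: infpath_prefix_eq.
Qed.

End InfinitePaths.

Section BorelPaths.
Variables (k : nat) (L : kgraph k).
Local Notation O0 := (zeroNN k).

Lemma borel_path_salg : sigma_algebra setT (borel_path L).
Proof. exact: smallest_sigma_algebra. Qed.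

Lemma borel_cyl l : borel_path L (cyl l).
Proof. by apply: sub_sigma_algebra; exists l. Qed.

Lemma borel_set1 (x : infpath L) : borel_path L [set x].
Proof.
by rewrite -(bigcap_path_cyl O0 x); apply: (salg_bigcap borel_path_salg) => j; exact: borel_cyl.
Qed.

Lemma borel_subset1 (A : set (infpath L)) : is_subset1 A -> borel_path L A.
Proof.
move=> A1; have [[x Ax]|A0] := pselect (exists x, A x).
  suff -> : A = [set x] by exact: borel_set1.
  by apply/seteqP; split=> [y Ay|y ->//]; exact: A1.
suff -> : A = set0 by exact: (salg0 borel_path_salg).
by apply/seteqP; split=> // y Ay; apply: A0; exists y.
Qed.

Lemma borel_orbit (w : infpath L) : borel_path L (Orbit w).
Proof.
have [code code_inj] := kMor_countable L.
pose piece (c : {ffun 'I_k -> nat} * {ffun 'I_k -> nat} * nat) :=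
  [set g : infpath L | shift c.1.1 g = shift c.1.2 w /\ code (g O0 c.1.1) = c.2].
have -> : Orbit w = \bigcup_c piece c.
  apply/seteqP; split=> [g [m [l e]]|g [[[m l] n] _ [e _]]]; last by exists m, l.
  by exists (m, l, code (g O0 m)).
apply: (salg_bigcup_count borel_path_salg) => -[[m l] n].
apply: borel_subset1 => g g' [e c] [e' c'].
by apply: (eq_shift_prefix (m := m)); [apply: code_inj; rewrite c c' | rewrite e e'].
Qed.

End BorelPaths.

Lemma xget_default (T : choiceType) (A : set T) a b :
  (exists x, A x) -> xget a A = xget b A.
Proof. by case=> x Ax; rewrite /xget; case: pselect => // -[]; exists x; exact/asboolP. Qed.

Section Transversal.
Variables (T : Type) (C : T -> set T).
Hypotheses (C_refl : forall w, C w w) (C_eq : forall w g, C w g -> C g = C w).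

Definition class_rep (w : T) : T := xget (w : {classic T}) (C w).

Lemma class_rep_in w : C w (class_rep w).
Proof. exact: xgetI (C_refl w). Qed.

Lemma eq_class_rep w w' : C w = C w' -> class_rep w = class_rep w'.
Proof. by move=> ww'; rewrite /class_rep ww'; apply: (@xget_default {classic T}); exists w'. Qed.

Lemma transversal_exists (Om : set T) : (forall w g, Om w -> C w g -> Om g) ->
  exists2 Rp : set T, Rp `<=` Om & trivIset Rp C /\ Om = \bigcup_(r in Rp) C r.
Proof.
move=> Om_closed; exists [set r | Om r /\ class_rep r = r] => [r []//|]; split.
  move=> r r' [_ rr] [_ rr'] [z [rz r'z]].
  by rewrite -rr -rr'; apply: eq_class_rep; rewrite -(C_eq rz) (C_eq r'z).
apply/seteqP; split=> [w Omw|g [r [Omr _] rg]]; last exact: Om_closed rg.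
have wr := class_rep_in w; exists (class_rep w); last by rewrite (C_eq wr).
by split; [exact: Om_closed wr | apply: eq_class_rep; exact: C_eq].
Qed.

End Transversal.

Section Representation.
Variables (k : nat) (L : kgraph k) (R : realType) (H : lmodType R[i]).
Variables (ip : H -> H -> R[i]) (t ts : kMor L -> H -> H) (P : set (infpath L) -> H -> H).
Hypotheses (hH : is_hilbert ip) (hK : is_krep ip t ts) (hA : assoc_PVM ip t ts P).
Local Notation O0 := (zeroNN k).

Lemma pvm_paths : is_PVM ip (borel_path L) P. Proof. by case: hA. Qed.
Lemma P_cyl l : P (cyl l) = t l \o ts l. Proof. by case: hA. Qed.
Lemma t_lin l : linear_op (t l). Proof. by case: hK => /(_ l) []. Qed.
Lemma t_adj l : adjoint_of ip (t l) (ts l). Proof. by case: hK => /(_ l) []. Qed.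
Lemma t_ts_t l : t l \o ts l \o t l = t l. Proof. by case: hK => /(_ l) []. Qed.
Lemma t_kid_idem v : t (kid v) \o t (kid v) = t (kid v). Proof. by case: hK => _ [/(_ v) []]. Qed.
Lemma ts_kid v : ts (kid v) = t (kid v). Proof. by case: hK => _ [/(_ v) []]. Qed.
Lemma t_comp l m : ksrc l = krng m -> t (kcomp l m) = t l \o t m.
Proof. by case: hK => _ _ + _ _; apply. Qed.
Lemma ts_t l : ts l \o t l = t (kid (ksrc l)). Proof. by case: hK. Qed.

Lemma tsB l a b : ts l (a - b) = ts l a - ts l b.
Proof. by apply: (ip_inj_r hH) => x; rewrite -t_adj !(ipBr hH) -!t_adj. Qed.

Lemma ts_comp l m : ksrc l = krng m -> forall h, ts (kcomp l m) h = ts m (ts l h).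
Proof. by move=> lm h; apply: (ip_inj_r hH) => x; rewrite -t_adj t_comp //= !t_adj. Qed.

Lemma t_kid_rng l h : t (kid (krng l)) (t l h) = t l h.
Proof. by rewrite -[in RHS](kcomp_idl l) t_comp // ksrc_id. Qed.

Lemma ts_kid_rng l h : ts l (t (kid (krng l)) h) = ts l h.
Proof. by rewrite -ts_kid -ts_comp ?kcomp_idl // ksrc_id. Qed.

Lemma t_contr l x : ip (t l x) (t l x) <= ip x x.
Proof. by apply: (adjoint_idem_contr hH (t_adj l)); rewrite ts_t t_kid_idem. Qed.

Lemma ts_contr l x : ip (ts l x) (ts l x) <= ip x x.
Proof.
have ts_adj : adjoint_of ip (ts l) (t l).
  by move=> a b; rewrite (ip_conj hH) -t_adj -(ip_conj hH).
by apply: (adjoint_idem_contr hH ts_adj); rewrite -[in RHS](t_ts_t l).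
Qed.

Lemma P_atom_limit b (z : infpath L) h :
  hconv ip (fun j => P (path_cyl b z j) h) (P [set z] h).
Proof.
rewrite -(bigcap_path_cyl b z); apply: (pvm_bigcap_nonincr hH (borel_path_salg L) pvm_paths).
  by move=> j; exact: borel_cyl.
exact: path_cyl_succ.
Qed.

Section ShiftedAtom.
Variables (x : infpath L) (n : NN k).
Let lam := x O0 n.
Let y := shift n x.

Lemma P_path_cyl_shift j h : P (path_cyl n x j) h = t lam (P (path_cyl O0 y j) (ts lam h)).
Proof.
rewrite /path_cyl add0NN !P_cyl /= infpath_comp t_comp ?ts_comp //; exact: infpath_src.
Qed.

Lemma ts_P_path_cyl j h : ts lam (P (path_cyl n x j) (t lam h)) = P (path_cyl O0 y j) h.
Proof.
have tst v : ts lam (t lam v) = t (kid (ksrc lam)) v by rewrite -ts_t.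
rewrite P_path_cyl_shift tst /path_cyl add0NN P_cyl /= tst.
by rewrite (infpath_src x O0 n (constNN k j)) t_kid_rng ts_kid_rng.
Qed.

Lemma P_atom_shift h : P [set x] h = t lam (P [set y] (ts lam h)).
Proof.
apply: (hconv_unique hH (P_atom_limit n x h)).
apply: eq_hconv (hconv_contr _ _ (P_atom_limit O0 y (ts lam h))).
- by move=> j; rewrite P_path_cyl_shift.
- exact: linear_opB (t_lin lam).
- exact: t_contr.
Qed.

Lemma P_atom_unshift h : P [set y] h = ts lam (P [set x] (t lam h)).
Proof.
apply: (hconv_unique hH (P_atom_limit O0 y h)).
apply: eq_hconv (hconv_contr _ _ (P_atom_limit n x (t lam h))).
- by move=> j; rewrite ts_P_path_cyl.
- exact: tsB.
- exact: ts_contr.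
Qed.

End ShiftedAtom.

Lemma P_atom_shift_eq0 x n : P [set x] = zero_op <-> P [set shift n x] = zero_op.
Proof.
split=> P_x0; apply/funext => h; rewrite /zero_op.
  by rewrite (P_atom_unshift x n) P_x0 /zero_op (additive_op0 (tsB _)).
by rewrite (P_atom_shift x n) P_x0 /zero_op (additive_op0 (linear_opB (t_lin _))).
Qed.

Lemma P_atom_eq0_orbit w g : Orbit w = Orbit g ->
  (P [set w] = zero_op <-> P [set g] = zero_op).
Proof.
move=> wg; have [m [l e]] : Orbit w g by rewrite wg; exact: orbit_refl.
by rewrite (P_atom_shift_eq0 w l) -e; exact: iff_sym (P_atom_shift_eq0 g m).
Qed.

End Representation.

Theorem corollary3p4 (k : nat) (L : kgraph k) (R : realType)
    (H : lmodType R[i]) (ip : H -> H -> R[i]) (t ts : kMor L -> H -> H)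
    (P : set (infpath L) -> H -> H) :
  (0 < k)%N -> row_finite L -> no_sources L ->
  is_hilbert ip -> is_krep ip t ts -> assoc_PVM ip t ts P ->
  (forall w g : infpath L, Orbit w = Orbit g ->
     (P [set w] = zero_op <-> P [set g] = zero_op))
  /\
  (purely_atomic ip P ->
     let Om := [set w : infpath L | P [set w] <> zero_op] in
     exists Rp : set (infpath L),
       [/\ Rp `<=` Om,
           forall w w', Rp w -> Rp w' -> w <> w' -> Orbit w `&` Orbit w' = set0,
           Om = \bigcup_(w in Rp) Orbit w,
           forall w w', Rp w -> Rp w' -> w <> w' ->
             P (Orbit w) \o P (Orbit w') = zero_op &
           forall h, hsum_to ip Rp (fun w => P (Orbit w) h) h]).
Proof.
move=> _ _ _ hH hK hA; split; first exact: (P_atom_eq0_orbit hH hK hA).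
case=> Om' [_ _ Om'_atoms Om'_sum] Om.
have Om_closed w g : Om w -> Orbit w g -> Om g.
  rewrite /Om /= => Omw /orbit_eq gw Pg0; apply: Omw.
  exact/(P_atom_eq0_orbit hH hK hA gw).
have [Rp RpOm [Rp_triv Om_orbits]] :=
  transversal_exists (@orbit_refl _ L) (@orbit_eq _ L) Om_closed.
have Rp_disj w w' : Rp w -> Rp w' -> w <> w' -> Orbit w `&` Orbit w' = set0.
  move=> Rw Rw' ww'; apply/seteqP; split=> // z wz; apply: ww'.
  by apply: Rp_triv => //; exists z.
have hM := borel_path_salg L; have hP := pvm_paths hA.
exists Rp; split=> // [w w' Rw Rw' ww'|h].
  rewrite -(pvmI hP (borel_orbit w) (borel_orbit w')) Rp_disj //.
  by apply/funext => h; exact: (pvm0 hP).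
apply: (hsum_to_pvm_coarsen hH hM hP _ _ Rp_triv _ _ (Om'_sum h)).
- by move=> w _; exact: borel_orbit.
- by move=> w _; exact: borel_set1.
- by move=> w w' _ _ [z [-> ->]].
move=> w /Om'_atoms Omw; have : Om w by [].
by rewrite Om_orbits => -[r Rr rw]; exists r => // z ->.
Qed.
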